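(* Let $H$, $G$ be real Hilbert spaces, $Z$ a nonempty closed convex subset of $H\times G$, $x_0\in H\times G$, $\{\lambda_n\}\subset(0,1]$, $\{H_n\}$ closed convex sets with $Z\subset H_n$, and let $\{x_n\},\{x_{n+1/2}\}$ be generated by $x_{n+1/2}=x_n+\lambda_n(P_{H_n}(x_n)-x_n)$, $x_{n+1}=P_{H(x_0,x_n)\cap C_n}(x_0)$, where each $C_n$ is closed convex with $Z\subset C_n\subset H(x_n,x_{n+1/2})$. Then for every $n\ge1$ and every $\bar x\in H(x_0,x_n)\cap H(x_n,x_{n+1/2})$, $$\|x_{n+1/2}-\bar x\|^2\le\|x_0-\bar x\|^2-\|x_n-x_0\|^2-\|x_{n+1/2}-x_n\|^2.$$
   Context: For $x,y\in H\times G$, $H(x,y):=\{h:\ \langle h-y\mid x-y\rangle\le 0\}$. $P_D$ is the metric projection onto a nonempty closed convex set $D$. *)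

From HB Require Import structures.
From mathcomp Require Import all_boot all_order all_algebra.
From mathcomp Require Import boolp classical_sets reals.
Set Implicit Arguments. Unset Strict Implicit. Unset Printing Implicit Defensive.
Import Order.TTheory GRing.Theory Num.Theory.
Local Open Scope ring_scope.
Local Open Scope classical_set_scope.

Definition inner_product (R : realType) (V : lmodType R) (ip : V -> V -> R) : Prop :=
  [/\ (forall x y, ip x y = ip y x),
      (forall x y z, ip (x + y) z = ip x z + ip y z),
      (forall (a : R) x y, ip (a *: x) y = a * ip x y),
      (forall x, 0 <= ip x x) &
      (forall x, ip x x = 0 -> x = 0)].

Section InnerSpace.
Variables (R : realType) (V : lmodType R) (ip : V -> V -> R).

Definition inorm (x : V) : R := Num.sqrt (ip x x).

Definition iconverges (u : nat -> V) (l : V) : Prop :=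
  forall e : R, 0 < e -> exists N, forall n, (N <= n)%N -> inorm (u n - l) < e.

Definition icauchy (u : nat -> V) : Prop :=
  forall e : R, 0 < e -> exists N, forall m n, (N <= m)%N -> (N <= n)%N ->
    inorm (u m - u n) < e.

Definition icomplete : Prop :=
  forall u, icauchy u -> exists l, iconverges u l.

Definition iclosed (D : set V) : Prop :=
  forall (u : nat -> V) l, (forall n, D (u n)) -> iconverges u l -> D l.

Definition convex_set (D : set V) : Prop :=
  forall x y (t : R), D x -> D y -> 0 <= t <= 1 -> D ((1 - t) *: x + t *: y).

Definition halfsp (x y : V) : set V := [set h | ip (h - y) (x - y) <= 0].

Definition is_proj (D : set V) (x p : V) : Prop :=
  D p /\ forall z, D z -> inorm (x - p) <= inorm (x - z).

End InnerSpace.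

From HB Require Import structures.
From mathcomp Require Import all_boot all_order all_algebra.
From mathcomp Require Import boolp classical_sets reals.
From mathcomp Require Import lra.
Set Implicit Arguments. Unset Strict Implicit. Unset Printing Implicit Defensive.
Import Order.TTheory GRing.Theory Num.Theory.
Local Open Scope ring_scope.
Local Open Scope classical_set_scope.

(* If [c] lies in the half-space [H(a, b)], the angle at [b] of the triangle
   [a b c] is not acute, so [|a - b|^2 + |b - c|^2 <= |a - c|^2].  Applying this
   to [H(x_0, x_n)] and then to [H(x_n, x_{n+1/2})] gives the estimate; none of
   the completeness, closedness or projection hypotheses is needed. *)

Section InnerProductAlgebra.
Variables (R : realType) (V : lmodType R) (ip : V -> V -> R).
Hypothesis ipP : inner_product ip.

Lemma ipDr x y z : ip x (y + z) = ip x y + ip x z.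
Proof. by case: ipP => ipC ipDl _ _ _; rewrite ipC ipDl !(ipC x). Qed.

Lemma ipNl x y : ip (- x) y = - ip x y.
Proof. by case: ipP => _ _ ipZl _ _; rewrite -scaleN1r ipZl mulN1r. Qed.

Lemma ipNr x y : ip x (- y) = - ip x y.
Proof. by case: ipP => ipC _ _ _ _; rewrite ipC ipNl ipC. Qed.

Lemma inorm_sqr x : inorm ip x ^+ 2 = ip x x.
Proof. by case: ipP => _ _ _ ipge0 _; rewrite sqr_sqrtr. Qed.

Lemma inorm_sqrD x y :
  inorm ip (x + y) ^+ 2 = inorm ip x ^+ 2 + inorm ip y ^+ 2 + 2 * ip x y.
Proof.
case: ipP => ipC ipDl _ _ _.
by rewrite !inorm_sqr ipDl !ipDr (ipC y x); lra.
Qed.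

Lemma inorm_distC x y : inorm ip (x - y) = inorm ip (y - x).
Proof. by rewrite /inorm -opprB ipNl ipNr opprK. Qed.

Lemma halfsp_pythagoras a b c : halfsp ip a b c ->
  inorm ip (a - b) ^+ 2 + inorm ip (b - c) ^+ 2 <= inorm ip (a - c) ^+ 2.
Proof.
case: ipP => ipC _ _ _ _; rewrite /halfsp /= => obtuse.
have -> : a - c = (a - b) + (b - c) by rewrite addrA subrK.
have cross : ip (a - b) (b - c) = - ip (c - b) (a - b).
  by rewrite -ipNl opprB ipC.
by rewrite (inorm_sqrD (a - b)) cross; lra.
Qed.

End InnerProductAlgebra.

Theorem corollary13 (R : realType) (V : lmodType R) (ip : V -> V -> R)
  (Z : set V) (x xh p : nat -> V) (lam : nat -> R) (Hs Cs : nat -> set V) :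
  inner_product ip -> icomplete ip ->
  Z !=set0 -> iclosed ip Z -> convex_set Z ->
  (forall n, 0 < lam n <= 1) ->
  (forall n, iclosed ip (Hs n) /\ convex_set (Hs n) /\ Z `<=` Hs n) ->
  (forall n, is_proj ip (Hs n) (x n) (p n)) ->
  (forall n, xh n = x n + lam n *: (p n - x n)) ->
  (forall n, iclosed ip (Cs n) /\ convex_set (Cs n) /\
             Z `<=` Cs n /\ Cs n `<=` halfsp ip (x n) (xh n)) ->
  (forall n, is_proj ip (halfsp ip (x 0%N) (x n) `&` Cs n) (x 0%N) (x n.+1)) ->
  forall n, (1 <= n)%N ->
  forall xb, halfsp ip (x 0%N) (x n) xb -> halfsp ip (x n) (xh n) xb ->
  inorm ip (xh n - xb) ^+ 2 <=
    inorm ip (x 0%N - xb) ^+ 2 - inorm ip (x n - x 0%N) ^+ 2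
    - inorm ip (xh n - x n) ^+ 2.
Proof.
move=> ipP _ _ _ _ _ _ _ _ _ _ n _ xb xb_H0n xb_Hn.
have := halfsp_pythagoras ipP xb_H0n.
have := halfsp_pythagoras ipP xb_Hn.
rewrite (inorm_distC ipP (x n) (x 0%N)) (inorm_distC ipP (xh n) (x n)).
lra.
Qed.
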